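(* For $0<a_-<a_+<1$, $$\int\log x\ \pi_{a_-,a_+}(dx)=\frac{\sigma_+\log\sigma_++\sigma_-\log\sigma_--(\sigma_++\sigma_--1)\log(\sigma_++\sigma_--1)}{1-\sigma_+},$$ where $\sigma_\pm=\sigma_\pm(a_-,a_+)$.
   Context: For $(b,c)\in(0,1)^2$, $\sigma_\pm(b,c)=\frac12\big[1+\sqrt{bc}\pm\sqrt{(1-b)(1-c)}\big]$. For $0<a_-<a_+<1$, $\pi_{a_-,a_+}(dx)=C_{a_-,a_+}\frac{\sqrt{(x-a_-)(a_+-x)}}{2\pi x(1-x)}\mathbf 1_{[a_-,a_+]}(x)dx$ (generalized McKay distribution), with normalization $C_{a_-,a_+}^{-1}=\frac12\big[1-\sqrt{a_-a_+}-\sqrt{(1-a_-)(1-a_+)}\big]$. *)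

From Stdlib Require Import Reals.
From Coquelicot Require Import Coquelicot.
Open Scope R_scope.

Definition sigma_plus (b c : R) : R :=
  / 2 * (1 + sqrt (b * c) + sqrt ((1 - b) * (1 - c))).
Definition sigma_minus (b c : R) : R :=
  / 2 * (1 + sqrt (b * c) - sqrt ((1 - b) * (1 - c))).

Definition mckay_C (am ap : R) : R :=
  / (/ 2 * (1 - sqrt (am * ap) - sqrt ((1 - am) * (1 - ap)))).

(* Lebesgue density of pi_{a-,a+} on [a-,a+] (the measure is supported there) *)
Definition mckay_density (am ap x : R) : R :=
  mckay_C am ap * sqrt ((x - am) * (ap - x)) / (2 * PI * x * (1 - x)).

From Stdlib Require Import Reals Lra Psatz.
From Coquelicot Require Import Coquelicot.
Open Scope R_scope.

(* Substituting [x = (a + b)/2 - (b - a)/2 cos t], [t] in [[0, PI]], removes the square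
   root from the density. Embed the integral in [Phi s = int ln (1 - s + s x) pi(dx)], so that
   [Phi 0 = 0]. By partial fractions, [Phi' s] reduces to the integrals
   [int_0^PI sin t ^ 2 / (A - p cos t) dt = PI (A - sqrt (A^2 - p^2)) / p^2], an elementary
   function of [s] involving [sqrt ((1 - s + s a) (1 - s + s b))]. Euler's substitution
   integrates it in logarithms, and at [s = 1] these logarithms collapse to the
   [sigma_plus], [sigma_minus] formula. *)

Ltac elim_square x Hxx :=
  let X := match type of Hxx with _ = ?X => X end in
  repeat match goal with
  | |- context [x ^ 4] => replace (x ^ 4) with (X * X) by (rewrite <- Hxx; ring)
  | |- context [x ^ 3] => replace (x ^ 3) with (x * X) by (rewrite <- Hxx; ring)
  | |- context [x ^ 2] => replace (x ^ 2) with X by (rewrite <- Hxx; ring)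
  end.

Lemma sin_sqr_eq (t : R) : sin t * sin t = 1 - cos t * cos t.
Proof. pose proof (sin2_cos2 t) as E. unfold Rsqr in E. lra. Qed.

(* The primitive of the Poisson kernel [(1 - k^2) / (1 - 2 k cos t + k^2)],
   continuous on the whole real line (unlike the usual [2 atan] formula in [tan (t/2)]). *)
Definition poisson_primitive (k t : R) : R :=
  t + 2 * atan (k * sin t / (1 - k * cos t)).

Lemma is_derive_poisson_primitive (k t : R) : 0 < k < 1 ->
  is_derive (poisson_primitive k) t ((1 - k * k) / (1 - 2 * k * cos t + k * k)).
Proof.
  intros Hk.
  pose proof (COS_bound t). pose proof (sin_sqr_eq t) as Hs.
  assert (Hden : 1 - k * cos t > 0) by nra.
  unfold poisson_primitive; auto_derive; [lra|].
  field_simplify_eq.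
  - elim_square (sin t) Hs; ring.
  - repeat split; nra.
Qed.

Lemma is_RInt_sin2_div_affine_cos (A p : R) : 0 < p -> p < A ->
  is_RInt (fun t => sin t ^ 2 / (A - p * cos t)) 0 PI
    (PI * (A - sqrt (A * A - p * p)) / (p * p)).
Proof.
  intros Hp HA.
  set (S := sqrt (A * A - p * p)).
  assert (HS : 0 < S) by (apply sqrt_lt_R0; nra).
  assert (HSS : S * S = A * A - p * p) by (apply sqrt_sqrt; nra).
  (* with this [k], [S / (A - p cos t)] is exactly the Poisson kernel *)
  set (k := p / (A + S)).
  assert (Hk : 0 < k < 1).
  { unfold k; split; [apply Rdiv_lt_0_compat; lra|].
    apply Rlt_div_l; lra. }
  set (F := fun t => (A * t + p * sin t - S * poisson_primitive k t) / (p * p)).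
  assert (HF : forall t, is_derive F t (sin t ^ 2 / (A - p * cos t))).
  { intro t.
    pose proof (COS_bound t). pose proof (sin_sqr_eq t) as Hs.
    pose proof (is_derive_poisson_primitive k t Hk) as HP.
    assert (Hkernel : (1 - k * k) / (1 - 2 * k * cos t + k * k) = S / (A - p * cos t)).
    { assert (0 < A + S - p) by lra.
      assert (0 <= p * (A + S) * (1 - cos t)) by (apply Rmult_le_pos; nra).
      assert (0 < (A + S - 2 * p * cos t) * (A + S) + p * p) by nra.
      unfold k; field_simplify_eq; [|repeat split; nra].
      elim_square S HSS; ring. }
    unfold F; auto_derive.
    - eexists; exact HP.
    - rewrite (is_derive_unique (fun x : R => poisson_primitive k x) t _ HP), Hkernel.
      field_simplify_eq; [|repeat split; nra].
      elim_square (sin t) Hs; elim_square S HSS; ring. }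
  replace (PI * (A - S) / (p * p)) with (F PI - F 0).
  - apply (is_RInt_derive F); intros t _; [apply HF|].
    apply (@ex_derive_continuous R_AbsRing R_NormedModule).
    pose proof (COS_bound t). auto_derive; nra.
  - unfold F, poisson_primitive.
    rewrite sin_PI, cos_PI, sin_0, cos_0, !Rmult_0_r, !Rdiv_0_l, atan_0.
    field; lra.
Qed.

Lemma continuity_pt_of_ex_derive (f : R -> R) (x : R) :
  ex_derive f x -> continuity_pt f x.
Proof.
  intro H. apply continuity_pt_filterlim.
  apply (@ex_derive_continuous R_AbsRing R_NormedModule). exact H.
Qed.

Lemma continuity_2d_pt_div_affine (g h : R -> R) (u v : R) :
  continuity_pt g v -> continuity_pt h v -> 1 - u + u * h v <> 0 ->
  continuity_2d_pt (fun u v => g v / (1 - u + u * h v)) u v.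
Proof.
  intros Hg Hh Hnz.
  assert (Hsnd : forall k : R -> R, continuity_pt k v ->
            continuity_2d_pt (fun _ v => k v) u v).
  { intros k Hk. apply (continuity_1d_2d_pt_comp k (fun _ v => v)); auto.
    apply continuity_2d_pt_id2. }
  apply continuity_2d_pt_mult; [apply Hsnd, Hg|].
  apply continuity_2d_pt_inv; auto.
  apply continuity_2d_pt_plus; [apply continuity_2d_pt_minus|apply continuity_2d_pt_mult].
  - apply continuity_2d_pt_const.
  - apply continuity_2d_pt_id1.
  - apply continuity_2d_pt_id1.
  - apply Hsnd, Hh.
Qed.

Lemma is_derive_RInt_param_open (f df : R -> R -> R) (D : R -> Prop) (lo hi x : R) :
  lo <= hi -> open D -> D x ->
  (forall u t, D u -> is_derive (fun z => f z t) u (df u t)) ->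
  (forall t, lo <= t <= hi -> continuity_2d_pt df x t) ->
  (forall u, D u -> ex_RInt (f u) lo hi) ->
  is_derive (fun u => RInt (f u) lo hi) x (RInt (df x) lo hi).
Proof.
  intros Hlo HD Dx Hf Hdf Hint.
  assert (HDx : locally x D) by (apply HD; exact Dx).
  rewrite (RInt_ext (df x) (fun t => Derive (fun u => f u t) x)).
  2: { intros t _. symmetry. apply is_derive_unique, Hf, Dx. }
  apply (is_derive_RInt_param f).
  - apply (filter_imp D); auto.
    intros u Du t _. eexists. apply Hf, Du.
  - intros t Ht. rewrite Rmin_left, Rmax_right in Ht by lra.
    apply (continuity_2d_pt_ext_loc df); [|apply Hdf, Ht].
    destruct HDx as [d Hd]. exists d. intros u v Hu _.
    symmetry. apply is_derive_unique, Hf, Hd, Hu.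
  - apply (filter_imp D); auto.
Qed.

Lemma sqrt_prod_spec (x y : R) : 0 < x -> 0 < y ->
  0 < sqrt (x * y) /\ sqrt (x * y) * sqrt (x * y) = x * y.
Proof.
  intros Hx Hy. pose proof (Rmult_lt_0_compat x y Hx Hy).
  split; [apply sqrt_lt_R0|apply sqrt_sqrt]; lra.
Qed.

Section McKay.

Variables a b : R.
Hypotheses (Ha : 0 < a) (Hab : a < b) (Hb : b < 1).

Definition chord (t : R) : R := (a + b) / 2 - (b - a) / 2 * cos t.

Lemma chord_bounds (t : R) : a <= chord t <= b.
Proof. pose proof (COS_bound t). unfold chord. nra. Qed.

Lemma chord_denominator_pos (t : R) : 0 < 2 * PI * chord t * (1 - chord t).
Proof.
  pose proof (chord_bounds t). pose proof PI_RGT_0.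
  assert (0 < chord t * (1 - chord t)) by nra. nra.
Qed.

Lemma is_derive_chord (t : R) : is_derive chord t ((b - a) / 2 * sin t).
Proof. unfold chord. auto_derive; [auto|ring]. Qed.

(* The density of [pi_{a,b}] pulled back along [x = chord t], [t] in [[0, PI]]. *)
Definition weight (t : R) : R :=
  mckay_C a b * ((b - a) / 2) ^ 2 * sin t ^ 2 / (2 * PI * chord t * (1 - chord t)).

Lemma ex_derive_weight (t : R) : ex_derive weight t.
Proof.
  pose proof (chord_denominator_pos t).
  unfold weight, chord in *. auto_derive. lra.
Qed.

Lemma mckay_density_chord (t : R) : 0 <= t <= PI ->
  (b - a) / 2 * sin t * mckay_density a b (chord t) = weight t.
Proof.
  intros Ht.
  pose proof (sin_ge_0 t (proj1 Ht) (proj2 Ht)).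
  assert (Hsq : (chord t - a) * (b - chord t) = Rsqr ((b - a) / 2 * sin t)).
  { rewrite Rsqr_mult, sin2.
    unfold chord, Rsqr. field. }
  unfold mckay_density, weight. rewrite Hsq, sqrt_Rsqr by (apply Rmult_le_pos; lra).
  pose proof (chord_bounds t). pose proof PI_RGT_0. field. repeat split; lra.
Qed.

Lemma continuous_ln_mckay_density (x : R) : a <= x <= b ->
  continuous (fun x => ln x * mckay_density a b x) x.
Proof.
  intros Hx. pose proof PI_RGT_0.
  apply continuity_pt_filterlim. unfold mckay_density.
  apply continuity_pt_mult.
  { apply continuity_pt_of_ex_derive. auto_derive. lra. }
  apply continuity_pt_div.
  - apply continuity_pt_mult; [apply continuity_pt_const; intros ? ?; reflexivity|].
    apply (continuity_pt_comp (fun x => (x - a) * (b - x)) sqrt).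
    + apply continuity_pt_of_ex_derive. auto_derive. auto.
    + apply continuity_pt_sqrt. nra.
  - apply continuity_pt_of_ex_derive. auto_derive. auto.
  - assert (0 < x * (1 - x)) by nra. nra.
Qed.

Lemma is_RInt_ln_mckay_density_of_chord (v : R) :
  is_RInt (fun t => ln (chord t) * weight t) 0 PI v ->
  is_RInt (fun x => ln x * mckay_density a b x) a b v.
Proof.
  intros Hv. pose proof PI_RGT_0.
  set (f := fun x => ln x * mckay_density a b x).
  assert (Hcomp : is_RInt (fun t => scal ((b - a) / 2 * sin t) (f (chord t))) 0 PI
                    (RInt f (chord 0) (chord PI))).
  { apply (@is_RInt_comp R_CompleteNormedModule).
    - intros t _. apply continuous_ln_mckay_density, chord_bounds.
    - intros t _. split; [apply is_derive_chord|].
      apply (@ex_derive_continuous R_AbsRing R_NormedModule). auto_derive. auto. }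
  replace (chord 0) with a in Hcomp by (unfold chord; rewrite cos_0; field).
  replace (chord PI) with b in Hcomp by (unfold chord; rewrite cos_PI; field).
  assert (HRInt : RInt f a b = v).
  { apply (is_RInt_unique (fun t => ln (chord t) * weight t)) in Hv.
    rewrite <- Hv. symmetry. apply is_RInt_unique.
    eapply is_RInt_ext; [|exact Hcomp].
    intros t Ht. rewrite Rmin_left, Rmax_right in Ht by lra.
    rewrite <- mckay_density_chord by lra.
    unfold f, scal; simpl; unfold mult; simpl. ring. }
  rewrite <- HRInt.
  apply (@RInt_correct R_CompleteNormedModule), (@ex_RInt_continuous R_CompleteNormedModule).
  intros x Hx. rewrite Rmin_left, Rmax_right in Hx by lra.
  apply continuous_ln_mckay_density, Hx.
Qed.

Lemma affine_chord_pos (s t : R) : s < / (1 - a) -> 0 < 1 - s + s * chord t.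
Proof.
  intros Hs. pose proof (chord_bounds t).
  apply (Rmult_lt_compat_r (1 - a)) in Hs; [|lra].
  rewrite Rinv_l in Hs by lra.
  destruct (Rle_lt_dec 0 s); nra.
Qed.

Lemma le_1_lt_inv_1_minus_a (s : R) : s <= 1 -> s < / (1 - a).
Proof.
  intros Hs. apply (Rle_lt_trans _ 1); [lra|].
  rewrite <- Rinv_1. apply Rinv_lt_contravar; lra.
Qed.

Lemma ex_RInt_ln_affine_chord (s : R) : s < / (1 - a) ->
  ex_RInt (fun t => ln (1 - s + s * chord t) * weight t) 0 PI.
Proof.
  intros Hs. apply (@ex_RInt_continuous R_CompleteNormedModule).
  intros t _. apply (@ex_derive_continuous R_AbsRing R_NormedModule).
  pose proof (affine_chord_pos s t Hs).
  apply ex_derive_mult; [|apply ex_derive_weight].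
  unfold chord in *. auto_derive. lra.
Qed.

Definition log_moment (s : R) : R :=
  RInt (fun t => ln (1 - s + s * chord t) * weight t) 0 PI.

Lemma is_derive_log_moment (s : R) : s < / (1 - a) ->
  is_derive log_moment s
    (RInt (fun t => (chord t - 1) * weight t / (1 - s + s * chord t)) 0 PI).
Proof.
  intros Hs. pose proof PI_RGT_0.
  apply (is_derive_RInt_param_open
           (fun s t => ln (1 - s + s * chord t) * weight t)
           (fun s t => (chord t - 1) * weight t / (1 - s + s * chord t))
           (fun u => u < / (1 - a))); auto; [lra|apply open_lt|..].
  - intros u t Hu. pose proof (affine_chord_pos u t Hu).
    auto_derive; [lra|field; lra].
  - intros t _. pose proof (affine_chord_pos s t Hs).
    apply continuity_2d_pt_div_affine; [| |lra]; apply continuity_pt_of_ex_derive.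
    + apply ex_derive_mult; [unfold chord; auto_derive; auto|apply ex_derive_weight].
    + eexists; apply is_derive_chord.
  - apply ex_RInt_ln_affine_chord.
Qed.

Definition quad_root (s : R) : R := sqrt ((1 - s + s * a) * (1 - s + s * b)).

Lemma quad_root_spec (s : R) : 0 <= s <= 1 ->
  0 < quad_root s /\ quad_root s * quad_root s = (1 - s + s * a) * (1 - s + s * b).
Proof.
  intros Hs. assert (0 < (1 - s + s * a) * (1 - s + s * b)).
  { apply Rmult_lt_0_compat; nra. }
  split; [apply sqrt_lt_R0|apply sqrt_sqrt]; lra.
Qed.

Definition log_moment_derivative (s : R) : R :=
  mckay_C a b / 2 * (sqrt (a * b) / (1 - s) + / s
    - quad_root s / (s * (1 - s))).

Lemma is_RInt_log_moment_derivative (s : R) : 0 < s < 1 ->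
  is_RInt (fun t => (chord t - 1) * weight t / (1 - s + s * chord t)) 0 PI
    (log_moment_derivative s).
Proof.
  intros Hs. pose proof PI_RGT_0.
  set (c := (a + b) / 2). set (r := (b - a) / 2). set (A := 1 - s + s * c).
  assert (Hr : 0 < r) by (unfold r; lra).
  pose proof (is_RInt_sin2_div_affine_cos c r Hr ltac:(unfold c, r; lra)) as I1.
  pose proof (is_RInt_sin2_div_affine_cos A (s * r) ltac:(nra)
                ltac:(unfold A, c, r; nra)) as I2.
  set (K := - (mckay_C a b * r * r / (2 * PI * (1 - s)))).
  (* partial fractions:
     [(x - 1) / (x (1 - x) (1 - s + s x)) = - (1 / x - s / (1 - s + s x)) / (1 - s)] *)
  pose proof (is_RInt_scal _ _ _ K _ (is_RInt_minus _ _ _ _ _ _ I1 (is_RInt_scal _ _ _ s _ I2)))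
    as I.
  replace (log_moment_derivative s) with
    (K * (PI * (c - sqrt (c * c - r * r)) / (r * r)
          - s * (PI * (A - sqrt (A * A - s * r * (s * r))) / (s * r * (s * r))))).
  - eapply is_RInt_ext; [|exact I]. intros t _. pose proof (chord_bounds t).
    pose proof (affine_chord_pos s t (le_1_lt_inv_1_minus_a s ltac:(lra))).
    unfold scal, minus, plus, opp; simpl; unfold mult; simpl.
    replace (c - r * cos t) with (chord t) by (unfold chord, c, r; ring).
    replace (A - s * r * cos t) with (1 - s + s * chord t) by (unfold chord, A, c, r; ring).
    unfold weight, K. fold r. field. repeat split; lra.
  - replace (c * c - r * r) with (a * b) by (unfold c, r; field).
    replace (A * A - s * r * (s * r)) with ((1 - s + s * a) * (1 - s + s * b))
      by (unfold A, c, r; field).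
    unfold log_moment_derivative, quad_root, K, A, c. fold r. field. repeat split; lra.
Qed.

(* The arguments of the logarithms produced by Euler's substitution in
   [int ds / (s q)], [int ds / ((1 - s) q)] and [int ds / q], where [q = quad_root s]. *)
Definition euler0 (s : R) : R := 2 - (2 - a - b) * s + 2 * quad_root s.
Definition euler1 (s : R) : R :=
  2 * (a * b) + (a * (1 - b) + b * (1 - a)) * (1 - s) + 2 * sqrt (a * b) * quad_root s.
Definition euler2 (s : R) : R :=
  2 - a - b - 2 * ((1 - a) * (1 - b)) * s + 2 * sqrt ((1 - a) * (1 - b)) * quad_root s.

Lemma euler_pos (s : R) : 0 <= s <= 1 -> 0 < euler0 s /\ 0 < euler1 s /\ 0 < euler2 s.
Proof.
  intros Hs.
  destruct (quad_root_spec s Hs) as [Hq _].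
  destruct (sqrt_prod_spec a b) as [Hg _]; [lra|lra|].
  destruct (sqrt_prod_spec (1 - a) (1 - b)) as [Hh _]; [lra|lra|].
  unfold euler0, euler1, euler2.
  split; [|split]; [nra| |].
  - assert (0 <= (a * (1 - b) + b * (1 - a)) * (1 - s)) by (apply Rmult_le_pos; nra). nra.
  - assert (0 < (1 - a) * (1 - b)) by nra. nra.
Qed.

Lemma is_derive_ln_euler0 (s : R) : 0 < s < 1 ->
  is_derive (fun s => ln (euler0 s)) s ((quad_root s - 1) / (s * quad_root s)).
Proof.
  intros Hs.
  destruct (quad_root_spec s) as [Hq Hqq]; [lra|].
  destruct (euler_pos s) as [HN _]; [lra|].
  unfold euler0, quad_root in *.
  auto_derive; change (1 + - s) with (1 - s) in *; [repeat split; nra|].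
  set (q := sqrt ((1 - s + s * a) * (1 - s + s * b))) in *.
  field_simplify_eq; [|repeat split; lra].
  elim_square q Hqq; ring.
Qed.

Lemma is_derive_ln_euler1 (s : R) : 0 < s < 1 ->
  is_derive (fun s => ln (euler1 s)) s
    ((sqrt (a * b) - quad_root s) / (quad_root s * (1 - s))).
Proof.
  intros Hs.
  destruct (quad_root_spec s) as [Hq Hqq]; [lra|].
  destruct (sqrt_prod_spec a b) as [Hg Hgg]; [lra|lra|].
  destruct (euler_pos s) as [_ [HN _]]; [lra|].
  unfold euler1, quad_root in *.
  auto_derive; change (1 + - s) with (1 - s) in *; [repeat split; nra|].
  set (q := sqrt ((1 - s + s * a) * (1 - s + s * b))) in *.
  set (g := sqrt (a * b)) in *.
  field_simplify_eq; [|repeat split; lra].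
  elim_square q Hqq; elim_square g Hgg; ring.
Qed.

Lemma is_derive_ln_euler2 (s : R) : 0 < s < 1 ->
  is_derive (fun s => ln (euler2 s)) s (- sqrt ((1 - a) * (1 - b)) / quad_root s).
Proof.
  intros Hs.
  destruct (quad_root_spec s) as [Hq Hqq]; [lra|].
  destruct (sqrt_prod_spec (1 - a) (1 - b)) as [Hh Hhh]; [lra|lra|].
  destruct (euler_pos s) as [_ [_ HN]]; [lra|].
  unfold euler2, quad_root in *.
  auto_derive; change (1 + - s) with (1 - s) in *; [repeat split; nra|].
  set (q := sqrt ((1 - s + s * a) * (1 - s + s * b))) in *.
  set (h := sqrt ((1 - a) * (1 - b))) in *.
  field_simplify_eq; [|repeat split; lra].
  elim_square q Hqq; elim_square h Hhh; ring.
Qed.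

Definition log_moment_primitive (s : R) : R :=
  mckay_C a b / 2 * (ln (euler0 s) - sqrt (a * b) * ln (euler1 s)
                     - sqrt ((1 - a) * (1 - b)) * ln (euler2 s)).

Lemma is_derive_log_moment_primitive (s : R) : 0 < s < 1 ->
  is_derive log_moment_primitive s (log_moment_derivative s).
Proof.
  intros Hs.
  pose proof (is_derive_scal _ s (mckay_C a b / 2) _
    (is_derive_minus _ _ s _ _
      (is_derive_minus _ _ s _ _ (is_derive_ln_euler0 s Hs)
        (is_derive_scal _ s (sqrt (a * b)) _ (is_derive_ln_euler1 s Hs)))
      (is_derive_scal _ s (sqrt ((1 - a) * (1 - b))) _ (is_derive_ln_euler2 s Hs)))) as D.
  unfold scal, minus, plus, opp in D; simpl in D; unfold mult in D; simpl in D.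
  match type of D with is_derive _ _ ?d => replace (log_moment_derivative s) with d end.
  { eapply is_derive_ext; [|exact D]. intro u. reflexivity. }
  destruct (quad_root_spec s) as [Hq Hqq]; [lra|].
  destruct (sqrt_prod_spec a b) as [Hg Hgg]; [lra|lra|].
  destruct (sqrt_prod_spec (1 - a) (1 - b)) as [Hh Hhh]; [lra|lra|].
  unfold log_moment_derivative.
  set (q := quad_root s) in *. set (g := sqrt (a * b)) in *.
  set (h := sqrt ((1 - a) * (1 - b))) in *.
  field_simplify_eq; [|repeat split; lra].
  elim_square q Hqq; elim_square g Hgg; elim_square h Hhh; ring.
Qed.

Lemma continuity_pt_log_moment_primitive (s : R) : 0 <= s <= 1 ->
  continuity_pt log_moment_primitive s.
Proof.
  intros Hs.
  destruct (euler_pos s Hs) as [H0 [H1 H2]].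
  destruct (quad_root_spec s Hs) as [Hq Hqq].
  apply continuity_pt_of_ex_derive.
  unfold log_moment_primitive, euler0, euler1, euler2, quad_root in *.
  auto_derive; change (1 + - s) with (1 - s); repeat split; nra.
Qed.

Lemma log_moment_increment :
  log_moment 1 - log_moment 0 = log_moment_primitive 1 - log_moment_primitive 0.
Proof.
  assert (HD : forall s, 0 <= s <= 1 -> is_derive log_moment s
    (RInt (fun t => (chord t - 1) * weight t / (1 - s + s * chord t)) 0 PI)).
  { intros s Hs. apply is_derive_log_moment, le_1_lt_inv_1_minus_a; lra. }
  destruct (fn_eq_Derive_eq log_moment log_moment_primitive 0 1) as [C HC].
  - apply continuity_pt_of_ex_derive. eexists. apply HD. lra.
  - apply continuity_pt_of_ex_derive. eexists. apply HD. lra.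
  - apply continuity_pt_log_moment_primitive. lra.
  - apply continuity_pt_log_moment_primitive. lra.
  - intros s Hs. eexists. apply HD. lra.
  - intros s Hs. eexists. apply is_derive_log_moment_primitive, Hs.
  - intros s Hs.
    rewrite (is_derive_unique _ _ _ (HD s ltac:(lra))),
      (is_derive_unique _ _ _ (is_derive_log_moment_primitive s Hs)).
    apply is_RInt_unique, is_RInt_log_moment_derivative, Hs.
  - rewrite (HC 1), (HC 0) by lra. ring.
Qed.

Lemma is_RInt_ln_chord_weight :
  is_RInt (fun t => ln (chord t) * weight t) 0 PI
    (log_moment_primitive 1 - log_moment_primitive 0).
Proof.
  rewrite <- log_moment_increment.
  assert (Hext : forall t, ln (1 - 1 + 1 * chord t) * weight t = ln (chord t) * weight t).
  { intro t. f_equal. f_equal. ring. }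
  replace (log_moment 0) with 0.
  2: { unfold log_moment. rewrite (RInt_ext _ (fun _ => 0)), RInt_const;
         [unfold scal; simpl; unfold mult; simpl; ring|].
       intros t _. replace (1 - 0 + 0 * chord t) with 1 by ring. rewrite ln_1. apply Rmult_0_l. }
  unfold log_moment. rewrite Rminus_0_r, (RInt_ext _ _ _ _ (fun t _ => Hext t)).
  apply (@RInt_correct R_CompleteNormedModule).
  apply (ex_RInt_ext (fun t => ln (1 - 1 + 1 * chord t) * weight t)).
  - intros t _. apply Hext.
  - apply ex_RInt_ln_affine_chord, le_1_lt_inv_1_minus_a. lra.
Qed.

Lemma sqrt_sum_lt_1 : sqrt (a * b) + sqrt ((1 - a) * (1 - b)) < 1.
Proof.
  destruct (sqrt_prod_spec a b) as [Hg Hgg]; [lra|lra|].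
  destruct (sqrt_prod_spec (1 - a) (1 - b)) as [Hh Hhh]; [lra|lra|].
  set (g := sqrt (a * b)) in *. set (h := sqrt ((1 - a) * (1 - b))) in *.
  (* strict AM-GM, as [a (1 - b) <> b (1 - a)] *)
  assert (Hamgm : 2 * (g * h) < a * (1 - b) + b * (1 - a)).
  { assert (Hsq : (g * h) * (g * h) = (a * (1 - b)) * (b * (1 - a))).
    { transitivity ((g * g) * (h * h)); [ring|]. rewrite Hgg, Hhh. ring. }
    assert (0 < g * h) by (apply Rmult_lt_0_compat; auto).
    assert (0 < a * (1 - b) + b * (1 - a)) by nra.
    nra. }
  nra.
Qed.

Lemma log_moment_primitive_increment :
  let sp := sigma_plus a b in
  let sm := sigma_minus a b in
  log_moment_primitive 1 - log_moment_primitive 0 =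
  (sp * ln sp + sm * ln sm - (sp + sm - 1) * ln (sp + sm - 1)) / (1 - sp).
Proof.
  intros sp sm.
  pose proof sqrt_sum_lt_1 as Hlt.
  destruct (sqrt_prod_spec a b) as [Hg Hgg]; [lra|lra|].
  destruct (sqrt_prod_spec (1 - a) (1 - b)) as [Hh Hhh]; [lra|lra|].
  assert (Hq1 : quad_root 1 = sqrt (a * b)) by (unfold quad_root; f_equal; ring).
  assert (Hq0 : quad_root 0 = 1).
  { unfold quad_root. replace ((1 - 0 + 0 * a) * (1 - 0 + 0 * b)) with 1 by ring.
    apply sqrt_1. }
  unfold log_moment_primitive, euler0, euler1, euler2.
  rewrite Hq0, Hq1.
  unfold sp, sm, sigma_plus, sigma_minus, mckay_C in *.
  set (g := sqrt (a * b)) in *. set (h := sqrt ((1 - a) * (1 - b))) in *.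
  set (p := / 2 * (1 + g + h)). set (m := / 2 * (1 + g - h)).
  (* the endpoint values of [euler0], [euler1], [euler2] factor through [p], [m] and [g] *)
  assert (Hp : 0 < p) by (unfold p; lra).
  assert (Hm : 0 < m) by (unfold m; lra).
  assert (E0 : 2 - (2 - a - b) * 1 + 2 * g = 4 * (p * m)) by (unfold p, m; nra).
  assert (E1 : 2 * (a * b) + (a * (1 - b) + b * (1 - a)) * (1 - 1) + 2 * g * g
               = 4 * (g * g)) by nra.
  assert (E2 : 2 * (a * b) + (a * (1 - b) + b * (1 - a)) * (1 - 0) + 2 * g * 1
               = 4 * (p * m)) by (unfold p, m; nra).
  set (M := 2 - a - b - 2 * ((1 - a) * (1 - b)) * 0 + 2 * h * 1).
  assert (HM : 0 < M) by (unfold M; nra).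
  assert (E3 : 2 - a - b - 2 * ((1 - a) * (1 - b)) * 1 + 2 * h * g = M * (m * / p)).
  { unfold M, m, p. field_simplify_eq; [|lra].
    elim_square g Hgg; elim_square h Hhh; ring. }
  replace (2 - (2 - a - b) * 0 + 2 * 1) with 4 by ring.
  replace (p + m - 1) with g by (unfold p, m; field).
  rewrite E0, E1, E2, E3, !ln_mult, ln_Rinv; try lra;
    try (apply Rmult_lt_0_compat; auto); try (apply Rinv_0_lt_compat; auto).
  replace (1 - p) with (/ 2 * (1 - g - h)) by (unfold p; field).
  unfold p, m. field. lra.
Qed.

End McKay.

Theorem proposition4p2 (am ap : R) :
  0 < am -> am < ap -> ap < 1 ->
  let sp := sigma_plus am ap in
  let sm := sigma_minus am ap in
  is_RInt (fun x => ln x * mckay_density am ap x) am ap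
    ((sp * ln sp + sm * ln sm - (sp + sm - 1) * ln (sp + sm - 1)) / (1 - sp)).
Proof.
  intros Ha Hab Hb sp sm.
  unfold sp, sm. rewrite <- (log_moment_primitive_increment am ap Ha Hab Hb).
  apply is_RInt_ln_mckay_density_of_chord; auto.
  apply is_RInt_ln_chord_weight; auto.
Qed.
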